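(* Let $\alpha\ge0$ and $\mu\ge0$ be fixed. For every uniformly continuous bounded function $g$ on $[0,\infty)$ and every compact set $A\subset[0,\infty)$, $T_n(g;x)\to g(x)$ uniformly in $x\in A$ as $n\to\infty$.
   Context: For $\mu>-\tfrac12$ define $\gamma_\mu(2k)=\dfrac{2^{2k}k!\,\Gamma(k+\mu+1/2)}{\Gamma(\mu+1/2)}$ and $\gamma_\mu(2k+1)=\dfrac{2^{2k+1}k!\,\Gamma(k+\mu+3/2)}{\Gamma(\mu+1/2)}$, $k\ge0$; $e_\mu(x)=\sum_{k\ge0} x^k/\gamma_\mu(k)$; $\theta_k=0$ if $k$ is even and $\theta_k=1$ if $k$ is odd. Let $h_k^\mu(\xi,\alpha)=\gamma_\mu(k)\sum_{j=0}^{\lfloor k/2\rfloor}\dfrac{\alpha^j\xi^{k-2j}}{j!\,\gamma_\mu(k-2j)}$. For $\alpha\ge0,\mu\ge0$, $n\in\mathbb{N}$ and $x\in[0,\infty)$ define $$T_n(f;x)=\frac{1}{e^{\alpha x^2}e_\mu(nx)}\sum_{k=0}^\infty \frac{h_k^\mu(n,\alpha)}{\gamma_\mu(k)}x^k f\!\left(\frac{k+2\mu\theta_k}{n}\right).$$ *)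

From Stdlib Require Import Reals Lra Lia.
From Coquelicot Require Import Coquelicot.
Open Scope R_scope.

Fixpoint poch (a : R) (m : nat) : R :=
  match m with
  | O => 1
  | S m' => poch a m' * (a + INR m')
  end.

(* Gamma(k + mu + 1/2) / Gamma(mu + 1/2), written as a rising factorial
   (no Gamma function is available in the libraries). *)
Definition gamma_ratio (mu : R) (k : nat) : R := poch (mu + /2) k.

Definition gamma_mu (mu : R) (k : nat) : R :=
  let m := Nat.div2 k in
  if Nat.even k
  then 2 ^ (2 * m) * INR (Factorial.fact m) * gamma_ratio mu m
  else 2 ^ (2 * m + 1) * INR (Factorial.fact m) * gamma_ratio mu (S m).

Definition e_mu (mu x : R) : R := Series (fun k => x ^ k / gamma_mu mu k).

Definition theta (k : nat) : R := if Nat.even k then 0 else 1.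

Definition h_mu (mu : R) (k : nat) (xi alpha : R) : R :=
  gamma_mu mu k *
  sum_f_R0 (fun j => alpha ^ j * xi ^ (k - 2 * j) / (INR (Factorial.fact j) * gamma_mu mu (k - 2 * j)))
           (Nat.div2 k).

Definition T_op (alpha mu : R) (n : nat) (f : R -> R) (x : R) : R :=
  / (exp (alpha * x ^ 2) * e_mu mu (INR n * x)) *
  Series (fun k => h_mu mu k (INR n) alpha / gamma_mu mu k * x ^ k
                   * f ((INR k + 2 * mu * theta k) / INR n)).

Definition unif_cont_nonneg (g : R -> R) : Prop :=
  forall eps : R, 0 < eps -> exists delta : R, 0 < delta /\
    forall x y : R, 0 <= x -> 0 <= y -> Rabs (x - y) < delta -> Rabs (g x - g y) < eps.

Definition bounded_nonneg (g : R -> R) : Prop :=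
  exists M : R, forall x : R, 0 <= x -> Rabs (g x) <= M.

From Stdlib Require Import Reals Lra Lia.
From Coquelicot Require Import Coquelicot.
Open Scope R_scope.

(** The weights [h_k(n, alpha) x^k / gamma_mu(k)] of [T_n] form the Cauchy product of the
    series of [exp (alpha x^2)] in powers of [x^2] and of [e_mu (n x)], so [T_n] is a positive
    operator reproducing constants.  The recursion
    [gamma_mu (k+1) = (k + 1 + 2 mu theta_(k+1)) gamma_mu k] yields the first two moments of
    the [e_mu] series, hence a second moment of [T_n] about [x] of order
    [x / n + exp (alpha x^2) / n^2], uniformly on compact sets.  A bounded uniformly
    continuous [g] satisfies [|g t - g x| <= eps + 2 M (t - x)^2 / delta^2]; averaging this
    against the weights of [T_n] gives the result. *)

Lemma is_series_scal_l_R (c : R) (a : nat -> R) (l : R) :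
  is_series a l -> is_series (fun n => c * a n) (c * l).
Proof. exact (@is_series_scal_l R_AbsRing R_NormedModule c a l). Qed.

Lemma is_series_plus_R (a b : nat -> R) (la lb : R) :
  is_series a la -> is_series b lb -> is_series (fun n => a n + b n) (la + lb).
Proof. exact (@is_series_plus R_AbsRing R_NormedModule a b la lb). Qed.

Lemma is_series_ext_R (a b : nat -> R) (l : R) :
  (forall n, a n = b n) -> is_series a l -> is_series b l.
Proof. exact (is_series_ext a b l). Qed.

Lemma ex_series_le_nonneg (a b : nat -> R) :
  (forall n, 0 <= a n <= b n) -> ex_series b -> ex_series a.
Proof.
  intros Hab. apply (@ex_series_le R_AbsRing R_CompleteNormedModule).
  intro n. change norm with Rabs. simpl. rewrite Rabs_pos_eq; apply Hab.
Qed.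

Lemma Series_le_is_series (a b : nat -> R) (l : R) :
  (forall n, 0 <= a n <= b n) -> is_series b l -> Series a <= l.
Proof.
  intros Hab Hb. rewrite <- (is_series_unique b l Hb).
  apply Series_le; [exact Hab | exists l; exact Hb].
Qed.

Lemma is_series_le_nonneg (a b : nat -> R) (l : R) :
  (forall n, 0 <= a n <= b n) -> is_series b l ->
  exists2 s : R, is_series a s & s <= l.
Proof.
  intros Hab Hb. exists (Series a); [|exact (Series_le_is_series a b l Hab Hb)].
  apply Series_correct, (ex_series_le_nonneg a b Hab). exists l; exact Hb.
Qed.

Lemma is_series_ge_first (a : nat -> R) (l : R) :
  (forall n, 0 <= a n) -> is_series a l -> a 0%nat <= l.
Proof.
  intros Ha Hl. assert (Hex : ex_series a) by (exists l; exact Hl).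
  rewrite <- (is_series_unique a l Hl), (Series_incr_1 a Hex).
  enough (0 <= Series (fun k => a (S k))) by lra.
  replace 0 with (0 * Series (fun k => a (S k))) at 1 by ring.
  rewrite <- Series_scal_l.
  apply Series_le; [intro k; rewrite Rmult_0_l; split; [lra | apply Ha]|].
  exact (proj1 (ex_series_incr_1 a) Hex).
Qed.

Lemma is_series_mult_nonneg (a b : nat -> R) (la lb : R) :
  (forall n, 0 <= a n) -> (forall n, 0 <= b n) -> is_series a la -> is_series b lb ->
  is_series (fun k => sum_f_R0 (fun i => a i * b (k - i)%nat) k) (la * lb).
Proof.
  intros Ha Hb Hla Hlb. apply is_series_mult; [exact Hla | exact Hlb | |].
  - apply (ex_series_ext a); [intro n; symmetry; apply Rabs_pos_eq, Ha | exists la; exact Hla].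
  - apply (ex_series_ext b); [intro n; symmetry; apply Rabs_pos_eq, Hb | exists lb; exact Hlb].
Qed.

Lemma is_series_exp (z : R) :
  is_series (fun j => z ^ j / INR (Factorial.fact j)) (exp z).
Proof.
  eapply is_series_ext; [|apply is_exp_Reals].
  intro j. change (pow_n z j * / INR (Factorial.fact j) = z ^ j / INR (Factorial.fact j)).
  now rewrite pow_n_pow.
Qed.

Definition spread2 (f : nat -> R) (i : nat) : R :=
  if Nat.even i then f (Nat.div2 i) else 0.

Lemma sum_f_R0_spread2 (f : nat -> R) (K : nat) :
  sum_f_R0 (spread2 f) K = sum_f_R0 f (Nat.div2 K).
Proof.
  induction K as [|K IHK]; [reflexivity|].
  simpl sum_f_R0 at 1. rewrite IHK. unfold spread2.
  destruct (Nat.Even_or_Odd K) as [[j ->] | [j ->]].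
  - replace (S (2 * j)) with (2 * j + 1)%nat by lia.
    rewrite Nat.even_odd, Nat.div2_odd', Nat.div2_double. ring.
  - replace (S (2 * j + 1)) with (2 * S j)%nat by lia.
    rewrite Nat.even_even, Nat.div2_odd', Nat.div2_double. reflexivity.
Qed.

Lemma is_series_spread2 (f : nat -> R) (l : R) :
  is_series f l -> is_series (spread2 f) l.
Proof.
  intro Hf. apply (filterlim_ext (fun K => sum_n f (Nat.div2 K))).
  - intro K. rewrite !sum_n_Reals. symmetry. apply sum_f_R0_spread2.
  - apply (filterlim_comp _ _ _ Nat.div2 (sum_n f) eventually eventually _); [|exact Hf].
    intros P [N HN]. exists (2 * N)%nat. intros n Hn.
    apply HN, Nat.div2_le_lower_bound. lia.
Qed.

Lemma pow2_INR_le_two_pow (j : nat) : INR j ^ 2 <= 2 * 2 ^ j.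
Proof.
  induction j as [|j IHj]; [simpl; lra|].
  destruct (Nat.le_gt_cases 3 j) as [Hj | Hj].
  - apply le_INR in Hj. rewrite S_INR. simpl pow in *. simpl INR in Hj. nra.
  - destruct j as [|[|[|]]]; simpl; try lra. lia.
Qed.

Lemma even_double_div2 (i : nat) : Nat.even i = true -> i = (2 * Nat.div2 i)%nat.
Proof.
  intro He. pose proof (Nat.div2_odd i) as Hi.
  rewrite <- Nat.negb_even, He in Hi. simpl in Hi. lia.
Qed.

Definition node (mu : R) (k : nat) : R := INR k + 2 * mu * theta k.

Lemma gamma_mu_double (mu : R) (j : nat) :
  gamma_mu mu (2 * j) = 2 ^ (2 * j) * INR (Factorial.fact j) * gamma_ratio mu j.
Proof. unfold gamma_mu. now rewrite Nat.div2_double, Nat.even_even. Qed.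

Lemma gamma_mu_double_S (mu : R) (j : nat) :
  gamma_mu mu (2 * j + 1) = 2 ^ (2 * j + 1) * INR (Factorial.fact j) * gamma_ratio mu (S j).
Proof. unfold gamma_mu. now rewrite Nat.div2_odd', Nat.even_odd. Qed.

Lemma theta_double (j : nat) : theta (2 * j) = 0.
Proof. unfold theta. now rewrite Nat.even_even. Qed.

Lemma theta_double_S (j : nat) : theta (2 * j + 1) = 1.
Proof. unfold theta. now rewrite Nat.even_odd. Qed.

Lemma poch_pos (a : R) (m : nat) : 0 < a -> 0 < poch a m.
Proof.
  intro Ha. induction m as [|m IHm]; simpl; [lra|].
  pose proof (pos_INR m). apply Rmult_lt_0_compat; lra.
Qed.

Lemma gamma_mu_pos (mu : R) (k : nat) : - / 2 < mu -> 0 < gamma_mu mu k.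
Proof.
  intro hmu. assert (Hfact : forall j, 0 < INR (Factorial.fact j))
    by (intro j; apply lt_0_INR, Factorial.lt_O_fact).
  unfold gamma_ratio in *.
  destruct (Nat.Even_or_Odd k) as [[j ->] | [j ->]];
    [rewrite gamma_mu_double | rewrite gamma_mu_double_S];
    repeat apply Rmult_lt_0_compat; auto;
    first [apply pow_lt; lra | apply poch_pos; lra | pose proof (pos_INR j); lra].
Qed.

Lemma gamma_mu_0 (mu : R) : gamma_mu mu 0 = 1.
Proof. unfold gamma_mu, gamma_ratio. simpl. ring. Qed.

Lemma gamma_mu_S (mu : R) (k : nat) :
  gamma_mu mu (S k) = node mu (S k) * gamma_mu mu k.
Proof.
  unfold node. destruct (Nat.Even_or_Odd k) as [[j ->] | [j ->]].
  - replace (S (2 * j)) with (2 * j + 1)%nat by lia.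
    rewrite gamma_mu_double_S, gamma_mu_double, theta_double_S.
    unfold gamma_ratio. simpl poch. rewrite pow_add, plus_INR, mult_INR. simpl INR. field.
  - replace (S (2 * j + 1)) with (2 * S j)%nat by lia.
    rewrite gamma_mu_double, gamma_mu_double_S, theta_double. unfold gamma_ratio.
    replace (2 * S j)%nat with (S (S (2 * j))) by lia.
    replace (2 * j + 1)%nat with (S (2 * j)) by lia.
    change (Factorial.fact (S j)) with (S j * Factorial.fact j)%nat.
    simpl pow. simpl poch. rewrite !mult_INR, !S_INR, mult_INR. simpl INR. ring.
Qed.

Lemma node_0 (mu : R) : node mu 0 = 0.
Proof. unfold node, theta. simpl. ring. Qed.

Lemma INR_le_node (mu : R) (k : nat) : 0 <= mu -> INR k <= node mu k.
Proof. intro hmu. unfold node, theta. destruct (Nat.even k); lra. Qed.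

Lemma node_S_le (mu : R) (k : nat) : 0 <= mu -> node mu (S k) <= node mu k + 1 + 2 * mu.
Proof.
  intro hmu. unfold node, theta. rewrite S_INR, Nat.even_succ, <- Nat.negb_even.
  destruct (Nat.even k); simpl; lra.
Qed.

Lemma node_add_even (mu : R) (i k : nat) :
  Nat.even i = true -> (i <= k)%nat -> node mu k = node mu (k - i) + INR i.
Proof.
  intros Hi Hik. unfold node.
  replace (theta k) with (theta (k - i)).
  - replace k with (k - i + i)%nat at 1 by lia. rewrite plus_INR. ring.
  - unfold theta. rewrite (even_double_div2 i Hi) in Hik |- *.
    replace k with (k - 2 * Nat.div2 i + 2 * Nat.div2 i)%nat at 2 by lia.
    now rewrite Nat.even_add_mul_2.
Qed.

Lemma fact_le_gamma_mu (mu : R) (k : nat) : 0 <= mu -> INR (Factorial.fact k) <= gamma_mu mu k.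
Proof.
  intro hmu. induction k as [|k IHk]; [rewrite gamma_mu_0; simpl; lra|].
  rewrite gamma_mu_S. change (Factorial.fact (S k)) with (S k * Factorial.fact k)%nat.
  rewrite mult_INR. apply Rmult_le_compat; auto using pos_INR, INR_le_node.
Qed.

Definition e_term (mu y : R) (m : nat) : R := y ^ m / gamma_mu mu m.

Section EMu.

Variables mu y : R.
Hypothesis hmu : 0 <= mu.
Hypothesis hy : 0 <= y.

Lemma e_term_nonneg (m : nat) : 0 <= e_term mu y m.
Proof.
  apply Rdiv_le_0_compat; [now apply pow_le | apply gamma_mu_pos; lra].
Qed.

Lemma is_series_e_mu : is_series (e_term mu y) (e_mu mu y).
Proof.
  apply Series_correct.
  apply (ex_series_le_nonneg _ (fun m => y ^ m / INR (Factorial.fact m))).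
  - intro m. split; [apply e_term_nonneg|].
    apply Rmult_le_compat_l; [now apply pow_le|].
    apply Rinv_le_contravar; [apply lt_0_INR, Factorial.lt_O_fact | now apply fact_le_gamma_mu].
  - exists (exp y). apply is_series_exp.
Qed.

Lemma e_mu_ge_1 : 1 <= e_mu mu y.
Proof.
  replace 1 with (e_term mu y 0) by (unfold e_term; rewrite gamma_mu_0; simpl; field).
  exact (is_series_ge_first _ _ e_term_nonneg is_series_e_mu).
Qed.

Lemma e_term_S_node (m : nat) : e_term mu y (S m) * node mu (S m) = y * e_term mu y m.
Proof.
  unfold e_term. rewrite gamma_mu_S.
  pose proof (gamma_mu_pos mu m ltac:(lra)).
  pose proof (INR_le_node mu (S m) hmu). pose proof (lt_0_INR (S m) ltac:(lia)).
  simpl pow. field. lra.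
Qed.

Lemma is_series_e_term_node :
  is_series (fun m => e_term mu y m * node mu m) (y * e_mu mu y).
Proof.
  apply is_series_decr_1. rewrite node_0.
  change (is_series (fun k => e_term mu y (S k) * node mu (S k))
            (y * e_mu mu y - e_term mu y 0 * 0)).
  rewrite Rmult_0_r, Rminus_0_r.
  apply (is_series_ext (fun k => y * e_term mu y k)).
  - intro k. symmetry. apply e_term_S_node.
  - apply is_series_scal_l_R, is_series_e_mu.
Qed.

(** [e_term (S m) * node (S m)^2 = y * e_term m * node (S m)], and [node] grows by at most
    [1 + 2 mu] per step. *)
Lemma is_series_e_term_node_sq :
  exists2 s : R, is_series (fun m => e_term mu y m * node mu m ^ 2) s
           & s <= y * (y * e_mu mu y + (1 + 2 * mu) * e_mu mu y).
Proof.
  destruct (is_series_le_nonneg (fun k => e_term mu y (S k) * node mu (S k) ^ 2)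
              (fun k => y * (e_term mu y k * node mu k + (1 + 2 * mu) * e_term mu y k))
              (y * (y * e_mu mu y + (1 + 2 * mu) * e_mu mu y))) as [s Hs Hsle].
  - intro k. split; [apply Rmult_le_pos; [apply e_term_nonneg | apply pow2_ge_0]|].
    replace (e_term mu y (S k) * node mu (S k) ^ 2) with (y * e_term mu y k * node mu (S k))
      by (rewrite <- e_term_S_node; ring).
    pose proof (node_S_le mu k hmu). pose proof (e_term_nonneg k).
    rewrite Rmult_assoc. apply Rmult_le_compat_l; [exact hy | nra].
  - apply is_series_scal_l_R, is_series_plus_R;
      [apply is_series_e_term_node | apply is_series_scal_l_R, is_series_e_mu].
  - exists s; [|exact Hsle]. apply is_series_decr_1. rewrite node_0.
    change (is_series (fun k => e_term mu y (S k) * node mu (S k) ^ 2)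
              (s - e_term mu y 0 * 0 ^ 2)).
    now rewrite pow_i, Rmult_0_r, Rminus_0_r by lia.
Qed.

Lemma is_series_e_term_central_moment :
  exists2 s : R, is_series (fun m => e_term mu y m * (node mu m - y) ^ 2) s
           & s <= (1 + 2 * mu) * y * e_mu mu y.
Proof.
  destruct is_series_e_term_node_sq as [s2 Hs2 Hs2le].
  exists (s2 - 2 * y * (y * e_mu mu y) + y ^ 2 * e_mu mu y); [|nra].
  apply (is_series_ext_R (fun m => (e_term mu y m * node mu m ^ 2
            + - (2 * y) * (e_term mu y m * node mu m)) + y ^ 2 * e_term mu y m)).
  - intro m. ring.
  - replace (s2 - 2 * y * (y * e_mu mu y) + y ^ 2 * e_mu mu y)
      with (s2 + - (2 * y) * (y * e_mu mu y) + y ^ 2 * e_mu mu y) by ring.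
    apply is_series_plus_R; [apply is_series_plus_R|]; auto using is_series_scal_l_R,
      is_series_e_term_node, is_series_e_mu.
Qed.

End EMu.

Definition exp_sq_term (alpha x : R) : nat -> R :=
  spread2 (fun j => (alpha * x ^ 2) ^ j / INR (Factorial.fact j)).

Section ExpSq.

Variables alpha x : R.
Hypothesis halpha : 0 <= alpha.

Lemma exp_sq_term_nonneg (i : nat) : 0 <= exp_sq_term alpha x i.
Proof.
  unfold exp_sq_term, spread2. destruct (Nat.even i); [|lra].
  apply Rdiv_le_0_compat; [apply pow_le, Rmult_le_pos; [exact halpha | apply pow2_ge_0]|].
  apply lt_0_INR, Factorial.lt_O_fact.
Qed.

Lemma is_series_exp_sq_term : is_series (exp_sq_term alpha x) (exp (alpha * x ^ 2)).
Proof. apply is_series_spread2, is_series_exp. Qed.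

(** [(2j)^2 <= 8 * 2^j] turns the second moment into the series of [exp (2 alpha x^2)]. *)
Lemma is_series_exp_sq_term_sq :
  exists2 s : R, is_series (fun i => exp_sq_term alpha x i * INR i ^ 2) s
               & s <= 8 * exp (alpha * x ^ 2) ^ 2.
Proof.
  set (z := alpha * x ^ 2).
  assert (Hz : 0 <= z) by (apply Rmult_le_pos; [exact halpha | apply pow2_ge_0]).
  apply (is_series_le_nonneg _ (fun i => 8 * spread2 (fun j => (2 * z) ^ j / INR (Factorial.fact j)) i)).
  - intro i. split; [apply Rmult_le_pos; [apply exp_sq_term_nonneg | apply pow2_ge_0]|].
    unfold exp_sq_term, spread2. fold z. destruct (Nat.even i) eqn:Ei; [|lra].
    pose proof (even_double_div2 i Ei) as Hi. set (j := Nat.div2 i) in *.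
    clearbody j. subst i.
    pose proof (lt_0_INR _ (Factorial.lt_O_fact j)). pose proof (pow_le z j Hz).
    pose proof (pow2_INR_le_two_pow j).
    rewrite mult_INR, Rpow_mult_distr. unfold Rdiv. rewrite Rpow_mult_distr. simpl INR.
    assert (0 <= z ^ j * / INR (Factorial.fact j))
      by (apply Rmult_le_pos; [lra | left; apply Rinv_0_lt_compat; lra]).
    nra.
  - replace (exp z ^ 2) with (exp (2 * z)) by (rewrite <- Rsqr_pow2, Rsqr_def, <- exp_plus; f_equal; ring).
    apply is_series_scal_l_R, is_series_spread2, is_series_exp.
Qed.

End ExpSq.

Lemma exp_sq_term_odd (alpha x : R) (i : nat) :
  Nat.even i = false -> exp_sq_term alpha x i = 0.
Proof. intro Ei. unfold exp_sq_term, spread2. now rewrite Ei. Qed.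

Definition T_weight (alpha mu : R) (n : nat) (x : R) (k : nat) : R :=
  h_mu mu k (INR n) alpha / gamma_mu mu k * x ^ k.

Section TWeight.

Variables alpha mu x : R.
Variable n : nat.
Hypothesis halpha : 0 <= alpha.
Hypothesis hmu : 0 <= mu.
Hypothesis hx : 0 <= x.

Lemma T_weight_convolution (k : nat) :
  T_weight alpha mu n x k =
  sum_f_R0 (fun i => exp_sq_term alpha x i * e_term mu (INR n * x) (k - i)) k.
Proof.
  rewrite (sum_eq _ (spread2 (fun j => (alpha * x ^ 2) ^ j / INR (Factorial.fact j)
                                     * e_term mu (INR n * x) (k - 2 * j)))).
  2:{ intros i _. unfold exp_sq_term, spread2. destruct (Nat.even i) eqn:Ei; [|ring].
      now rewrite <- (even_double_div2 i Ei). }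
  rewrite sum_f_R0_spread2. unfold T_weight, h_mu.
  pose proof (gamma_mu_pos mu k ltac:(lra)).
  set (S := sum_f_R0 _ (Nat.div2 k)).
  replace (gamma_mu mu k * S / gamma_mu mu k * x ^ k) with (x ^ k * S) by (field; lra).
  unfold S. rewrite scal_sum. apply sum_eq. intros j Hj.
  assert (Hjk : (2 * j <= k)%nat).
  { pose proof (Nat.div2_odd k). destruct (Nat.odd k); simpl in *; lia. }
  unfold e_term. pose proof (gamma_mu_pos mu (k - 2 * j) ltac:(lra)).
  pose proof (lt_0_INR _ (Factorial.lt_O_fact j)).
  replace (x ^ k) with ((x ^ 2) ^ j * x ^ (k - 2 * j))
    by (rewrite <- pow_mult, <- pow_add; f_equal; lia).
  rewrite !Rpow_mult_distr. field. lra.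
Qed.

Lemma T_weight_nonneg (k : nat) : 0 <= T_weight alpha mu n x k.
Proof.
  rewrite T_weight_convolution. apply cond_pos_sum. intro i.
  apply Rmult_le_pos; [now apply exp_sq_term_nonneg | apply e_term_nonneg; auto].
  apply Rmult_le_pos; [apply pos_INR | exact hx].
Qed.

Lemma is_series_T_weight :
  is_series (T_weight alpha mu n x) (exp (alpha * x ^ 2) * e_mu mu (INR n * x)).
Proof.
  assert (hy : 0 <= INR n * x) by (apply Rmult_le_pos; [apply pos_INR | exact hx]).
  apply (is_series_ext_R (fun k => sum_f_R0 (fun i =>
           exp_sq_term alpha x i * e_term mu (INR n * x) (k - i)) k)).
  - intro k. symmetry. apply T_weight_convolution.
  - apply is_series_mult_nonneg; auto using exp_sq_term_nonneg, e_term_nonneg,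
      is_series_exp_sq_term, is_series_e_mu.
Qed.

(** Inside the convolution write [node k = node (k - i) + i] (valid for the even [i],
    the only ones with [exp_sq_term i <> 0]) and use [(u + v)^2 <= 2 u^2 + 2 v^2]. *)
Lemma T_weight_node_sq_le (k : nat) :
  (0 < n)%nat ->
  T_weight alpha mu n x k * (node mu k / INR n - x) ^ 2 <=
  sum_f_R0 (fun i => exp_sq_term alpha x i * (2 / INR n ^ 2 * (e_term mu (INR n * x) (k - i)
                                          * (node mu (k - i) - INR n * x) ^ 2))) k
  + sum_f_R0 (fun i => 2 / INR n ^ 2 * (exp_sq_term alpha x i * INR i ^ 2)
                        * e_term mu (INR n * x) (k - i)) k.
Proof.
  intro hn. pose proof (lt_0_INR n hn) as Hn.
  rewrite T_weight_convolution, Rmult_comm, scal_sum, <- sum_plus.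
  apply sum_Rle. intros i Hik.
  destruct (Nat.even i) eqn:Ei; [|rewrite exp_sq_term_odd by exact Ei; lra].
  rewrite (node_add_even mu i k Ei Hik).
  set (a := exp_sq_term alpha x i). set (b := e_term mu (INR n * x) (k - i)).
  set (u := node mu (k - i) - INR n * x).
  assert (Hab : 0 <= a * b).
  { apply Rmult_le_pos; [now apply exp_sq_term_nonneg | apply e_term_nonneg; auto].
    apply Rmult_le_pos; [lra | exact hx]. }
  replace ((node mu (k - i) + INR i) / INR n - x) with ((u + INR i) / INR n)
    by (unfold u; field; lra).
  replace (a * (2 / INR n ^ 2 * (b * u ^ 2)) + 2 / INR n ^ 2 * (a * INR i ^ 2) * b)
    with (a * b * (2 * u ^ 2 + 2 * INR i ^ 2) / INR n ^ 2) by (field; lra).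
  replace (a * b * ((u + INR i) / INR n) ^ 2) with (a * b * (u + INR i) ^ 2 / INR n ^ 2)
    by (field; lra).
  apply Rmult_le_compat_r; [left; apply Rinv_0_lt_compat, pow_lt; lra|].
  apply Rmult_le_compat_l; [exact Hab|]. pose proof (pow2_ge_0 (u - INR i)). nra.
Qed.

Lemma T_weight_second_moment :
  (0 < n)%nat ->
  exists2 V : R, is_series (fun k => T_weight alpha mu n x k * (node mu k / INR n - x) ^ 2) V
    & V <= exp (alpha * x ^ 2) * e_mu mu (INR n * x)
           * (2 * (1 + 2 * mu) * x / INR n + 16 * exp (alpha * x ^ 2) / INR n ^ 2).
Proof.
  intro hn. pose proof (lt_0_INR n hn) as Hn.
  set (y := INR n * x). assert (hy : 0 <= y) by (unfold y; nra).
  set (a := exp_sq_term alpha x). set (b := e_term mu y).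
  set (E := e_mu mu y). set (eA := exp (alpha * x ^ 2)).
  set (c := 2 / INR n ^ 2).
  assert (Hc : 0 <= c) by (unfold c; apply Rdiv_le_0_compat; [lra | apply pow_lt; lra]).
  assert (HE : 1 <= E) by (now apply e_mu_ge_1).
  assert (HeA : 0 < eA) by apply exp_pos.
  destruct (is_series_e_term_central_moment mu y hmu hy) as [sF HsF HsFle].
  destruct (is_series_exp_sq_term_sq alpha x halpha) as [sG HsG HsGle].
  fold b in HsF. fold a in HsG. fold E in HsFle. fold eA in HsGle.
  assert (HP : is_series (fun k => sum_f_R0 (fun i =>
                 a i * (c * (b (k - i)%nat * (node mu (k - i) - y) ^ 2))) k) (eA * (c * sF))).
  { apply (is_series_mult_nonneg a (fun m => c * (b m * (node mu m - y) ^ 2))).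
    - exact (exp_sq_term_nonneg alpha x halpha).
    - intro m. apply Rmult_le_pos; [exact Hc|].
      apply Rmult_le_pos; [now apply e_term_nonneg | apply pow2_ge_0].
    - apply is_series_exp_sq_term.
    - now apply is_series_scal_l_R. }
  assert (HQ : is_series (fun k => sum_f_R0 (fun i =>
                 c * (a i * INR i ^ 2) * b (k - i)%nat) k) (c * sG * E)).
  { apply (is_series_mult_nonneg (fun i => c * (a i * INR i ^ 2)) b).
    - intro i. apply Rmult_le_pos; [exact Hc|].
      apply Rmult_le_pos; [now apply exp_sq_term_nonneg | apply pow2_ge_0].
    - exact (e_term_nonneg mu y hmu hy).
    - now apply is_series_scal_l_R.
    - now apply is_series_e_mu. }
  assert (Hpt : forall k, 0 <= T_weight alpha mu n x k * (node mu k / INR n - x) ^ 2 <=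
    sum_f_R0 (fun i => a i * (c * (b (k - i)%nat * (node mu (k - i) - y) ^ 2))) k
    + sum_f_R0 (fun i => c * (a i * INR i ^ 2) * b (k - i)%nat) k).
  { intro k. split; [apply Rmult_le_pos; [apply T_weight_nonneg | apply pow2_ge_0]|].
    exact (T_weight_node_sq_le k hn). }
  destruct (is_series_le_nonneg _ _ _ Hpt (is_series_plus_R _ _ _ _ HP HQ)) as [V HV HVle].
  exists V; [exact HV|]. apply (Rle_trans _ _ _ HVle).
  apply (Rle_trans _ (eA * (c * ((1 + 2 * mu) * y * E)) + c * (8 * eA ^ 2) * E)).
  - apply Rplus_le_compat; [apply Rmult_le_compat_l; [lra|] | apply Rmult_le_compat_r; [lra|]];
      apply Rmult_le_compat_l; assumption.
  - right. unfold c, y. field. lra.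
Qed.

End TWeight.

Lemma weighted_mean_deviation (w t : nat -> R) (S V : R) (f : R -> R) (x eps K : R) :
  0 < S -> (forall k, 0 <= w k) -> is_series w S ->
  is_series (fun k => w k * (t k - x) ^ 2) V ->
  (forall k, Rabs (f (t k) - f x) <= eps + K * (t k - x) ^ 2) ->
  Rabs (/ S * Series (fun k => w k * f (t k)) - f x) <= eps + K * V / S.
Proof.
  intros HS Hw HwS HwV Hf.
  assert (Hdom : is_series (fun k => eps * w k + K * (w k * (t k - x) ^ 2)) (eps * S + K * V))
    by (apply is_series_plus_R; now apply is_series_scal_l_R).
  assert (Hdev : forall k, 0 <= Rabs (w k * (f (t k) - f x))
                             <= eps * w k + K * (w k * (t k - x) ^ 2)).
  { intro k. split; [apply Rabs_pos|]. rewrite Rabs_mult, Rabs_pos_eq by apply Hw.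
    specialize (Hf k). specialize (Hw k). nra. }
  assert (Hex : ex_series (fun k => w k * (f (t k) - f x))).
  { apply ex_series_Rabs, (ex_series_le_nonneg _ _ Hdev). eexists; exact Hdom. }
  assert (Hsplit : Series (fun k => w k * f (t k))
                   = Series (fun k => w k * (f (t k) - f x)) + f x * S).
  { rewrite <- (is_series_unique _ _ HwS), <- Series_scal_l, <- Series_plus;
      [apply Series_ext; intro k; ring | exact Hex | exists (f x * S); now apply is_series_scal_l_R]. }
  rewrite Hsplit.
  replace (/ S * (Series (fun k => w k * (f (t k) - f x)) + f x * S) - f x)
    with (/ S * Series (fun k => w k * (f (t k) - f x))) by (field; lra).
  rewrite Rabs_mult, Rabs_pos_eq by (left; now apply Rinv_0_lt_compat).
  replace (eps + K * V / S) with (/ S * (eps * S + K * V)) by (field; lra).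
  apply Rmult_le_compat_l; [left; now apply Rinv_0_lt_compat|].
  apply (Rle_trans _ _ _ (Series_Rabs _ (ex_series_le_nonneg _ _ Hdev (ex_intro _ _ Hdom)))).
  exact (Series_le_is_series _ _ _ Hdev Hdom).
Qed.

(** Far from [x], [2 M] is absorbed by the quadratic term [2 M (t - x)^2 / delta^2]. *)
Lemma deviation_le_quadratic (f : R -> R) (M delta eps x : R) :
  0 < delta -> 0 <= x -> (forall t, 0 <= t -> Rabs (f t) <= M) ->
  (forall t, 0 <= t -> Rabs (t - x) < delta -> Rabs (f t - f x) < eps) ->
  forall t, 0 <= t -> Rabs (f t - f x) <= eps + 2 * M / delta ^ 2 * (t - x) ^ 2.
Proof.
  intros Hd hx HM Hclose t ht.
  assert (HK : 0 <= 2 * M / delta ^ 2).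
  { pose proof (HM x hx) as Hx. pose proof (Rabs_pos (f x)).
    apply Rdiv_le_0_compat; [lra | apply pow_lt; lra]. }
  pose proof (pow2_ge_0 (t - x)).
  destruct (Rlt_le_dec (Rabs (t - x)) delta) as [Hlt | Hge].
  - pose proof (Hclose t ht Hlt). pose proof (Rmult_le_pos _ _ HK (pow2_ge_0 (t - x))). lra.
  - assert (Heps : 0 < eps).
    { apply (Rle_lt_trans _ (Rabs (f x - f x))); [apply Rabs_pos|].
      apply Hclose; [exact hx|]. rewrite Rminus_diag, Rabs_R0. exact Hd. }
    assert (Hsq : delta ^ 2 <= (t - x) ^ 2).
    { rewrite <- (pow2_abs (t - x)). apply pow_incr. lra. }
    assert (H2M : 2 * M <= 2 * M / delta ^ 2 * (t - x) ^ 2).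
    { replace (2 * M) with (2 * M / delta ^ 2 * delta ^ 2) at 1 by (field; lra).
      now apply Rmult_le_compat_l. }
    pose proof (Rabs_triang (f t) (- f x)) as Htri. rewrite Rabs_Ropp in Htri.
    pose proof (HM t ht). pose proof (HM x hx). unfold Rminus. lra.
Qed.

Lemma node_nonneg (mu : R) (k : nat) : 0 <= mu -> 0 <= node mu k.
Proof. intro hmu. pose proof (pos_INR k). pose proof (INR_le_node mu k hmu). lra. Qed.

Lemma T_op_deviation (alpha mu : R) (n : nat) (f : R -> R) (x eps K : R) :
  0 <= alpha -> 0 <= mu -> (0 < n)%nat -> 0 <= x -> 0 <= K ->
  (forall t, 0 <= t -> Rabs (f t - f x) <= eps + K * (t - x) ^ 2) ->
  Rabs (T_op alpha mu n f x - f x)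
    <= eps + K * (2 * (1 + 2 * mu) * x / INR n + 16 * exp (alpha * x ^ 2) / INR n ^ 2).
Proof.
  intros halpha hmu hn hx HK Hf. pose proof (lt_0_INR n hn) as Hn.
  set (S := exp (alpha * x ^ 2) * e_mu mu (INR n * x)).
  assert (HS : 0 < S).
  { pose proof (e_mu_ge_1 mu (INR n * x) hmu ltac:(nra)).
    pose proof (exp_pos (alpha * x ^ 2)). unfold S. nra. }
  destruct (T_weight_second_moment alpha mu x n halpha hmu hx hn) as [V HV HVle].
  change (T_op alpha mu n f x) with
    (/ S * Series (fun k => T_weight alpha mu n x k * f (node mu k / INR n))).
  eapply Rle_trans.
  - apply (weighted_mean_deviation _ _ S V); auto using T_weight_nonneg, is_series_T_weight.
    intro k. apply Hf, Rdiv_le_0_compat; [now apply node_nonneg | exact Hn].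
  - apply Rplus_le_compat_l. unfold Rdiv at 1. rewrite Rmult_assoc.
    apply Rmult_le_compat_l; [exact HK|].
    apply (Rmult_le_reg_l S); [exact HS|].
    replace (S * (V * / S)) with V by (field; lra). exact HVle.
Qed.

Lemma moment_bound_le_const (alpha mu x b : R) (n : nat) :
  0 <= alpha -> 0 <= mu -> 0 <= x <= b -> (0 < n)%nat ->
  2 * (1 + 2 * mu) * x / INR n + 16 * exp (alpha * x ^ 2) / INR n ^ 2
    <= (2 * (1 + 2 * mu) * b + 16 * exp (alpha * b ^ 2)) / INR n.
Proof.
  intros halpha hmu [hx hxb] hn.
  assert (Hn : 1 <= INR n) by (apply (le_INR 1); lia).
  assert (Hexp : exp (alpha * x ^ 2) <= exp (alpha * b ^ 2)).
  { assert (Hsq : alpha * x ^ 2 <= alpha * b ^ 2)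
      by (apply Rmult_le_compat_l; [exact halpha | apply pow_incr; lra]).
    destruct (Rle_lt_or_eq_dec _ _ Hsq) as [Hlt | ->]; [left; now apply exp_increasing | lra]. }
  pose proof (exp_pos (alpha * x ^ 2)).
  apply (Rmult_le_reg_r (INR n ^ 2)); [apply pow_lt; lra|].
  replace ((2 * (1 + 2 * mu) * x / INR n + 16 * exp (alpha * x ^ 2) / INR n ^ 2) * INR n ^ 2)
    with (2 * (1 + 2 * mu) * x * INR n + 16 * exp (alpha * x ^ 2)) by (field; lra).
  replace ((2 * (1 + 2 * mu) * b + 16 * exp (alpha * b ^ 2)) / INR n * INR n ^ 2)
    with ((2 * (1 + 2 * mu) * b + 16 * exp (alpha * b ^ 2)) * INR n) by (field; lra).
  assert (Hxn : (1 + 2 * mu) * (x * INR n) <= (1 + 2 * mu) * (b * INR n))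
    by (apply Rmult_le_compat_l; [lra | apply Rmult_le_compat_r; lra]).
  nra.
Qed.

Lemma eventually_div_INR_lt (C eps : R) :
  0 < eps -> exists N : nat, (0 < N)%nat /\ forall n, (N <= n)%nat -> C / INR n < eps.
Proof.
  intro Heps. pose proof (Rabs_pos C) as HC.
  destruct (archimed_cor1 (eps / (Rabs C + 1))) as [N [HN HN0]];
    [apply Rdiv_lt_0_compat; lra|].
  exists N. split; [exact HN0|]. intros n Hn.
  assert (HNpos : 0 < INR N) by (now apply lt_0_INR).
  assert (HNn : INR N <= INR n) by (now apply le_INR).
  apply (Rle_lt_trans _ (Rabs C / INR N)).
  - unfold Rdiv. apply (Rle_trans _ (Rabs C * / INR n)).
    + apply Rmult_le_compat_r; [left; apply Rinv_0_lt_compat; lra | apply Rle_abs].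
    + apply Rmult_le_compat_l; [exact HC | now apply Rinv_le_contravar].
  - apply (Rle_lt_trans _ (Rabs C * (eps / (Rabs C + 1)))).
    + unfold Rdiv at 1. apply Rmult_le_compat_l; lra.
    + apply (Rmult_lt_reg_r (Rabs C + 1)); [lra|].
      replace (Rabs C * (eps / (Rabs C + 1)) * (Rabs C + 1)) with (Rabs C * eps) by (field; lra).
      nra.
Qed.

Theorem theorem4 (alpha mu : R) (halpha : 0 <= alpha) (hmu : 0 <= mu)
  (g : R -> R) (hg_uc : unif_cont_nonneg g) (hg_b : bounded_nonneg g)
  (A : R -> Prop) (hA_sub : forall x, A x -> 0 <= x) (hA_cpt : compact A) :
  forall eps : R, 0 < eps -> exists N : nat, forall n : nat, (N <= n)%nat ->
    forall x : R, A x -> Rabs (T_op alpha mu n g x - g x) < eps.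
Proof.
  intros eps Heps.
  destruct (hg_uc (eps / 2) ltac:(lra)) as [delta [Hdelta Hclose]].
  destruct hg_b as [M HM].
  destruct (compact_P1 A hA_cpt) as [m [b Hb]].
  set (K := 2 * M / delta ^ 2).
  assert (HK : 0 <= K).
  { pose proof (HM 0 (Rle_refl 0)). pose proof (Rabs_pos (g 0)).
    apply Rdiv_le_0_compat; [lra | apply pow_lt; lra]. }
  destruct (eventually_div_INR_lt (K * (2 * (1 + 2 * mu) * b + 16 * exp (alpha * b ^ 2))) (eps / 2))
    as [N [HN HNC]]; [lra|].
  exists N. intros n Hn x Hx.
  assert (hx : 0 <= x <= b) by (split; [now apply hA_sub | apply (Hb x Hx)]).
  assert (hn : (0 < n)%nat) by lia.
  eapply Rle_lt_trans.
  - apply (T_op_deviation alpha mu n g x (eps / 2) K halpha hmu hn (proj1 hx) HK).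
    apply (deviation_le_quadratic g M delta (eps / 2) x Hdelta (proj1 hx) HM).
    intros t ht. now apply Hclose.
  - specialize (HNC n Hn). unfold Rdiv at 2 in HNC. rewrite Rmult_assoc in HNC.
    pose proof (Rmult_le_compat_l K _ _ HK
      (moment_bound_le_const alpha mu x b n halpha hmu hx hn)). lra.
Qed.
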